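(* The following hold: (1) $F$ is of class $C^1$ on $(1,+\infty)$ and $F'<0$ on $(1,+\infty)$; (2) $\lim_{E\to+\infty}F(E)=-\infty$; (3) $\lim_{E\to1^+}F(E)=+\infty$ and $\lim_{E\to1^-}F(E)=+\infty$; (4) $F$ has a unique zero $E_c$ in $(1,+\infty)$, and $F'(E_c)<0$; (5) $F(E)>0$ for all $E\in(0,1)$.
   Context: For $E\in(0,1)\cup(1,+\infty)$, let $$F(E)=\int_{\sqrt{(2-2\sqrt E)_+}}^{\sqrt{2+2\sqrt E}}\frac{2-x^2}{\sqrt{E-(x^2/2-1)^2}}\,dx,$$ where $(z)_+=\max\{z,0\}$. *)

From Stdlib Require Import Reals.
From Coquelicot Require Import Coquelicot.
Open Scope R_scope.

Definition integrand (E x : R) : R :=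
  (2 - x ^ 2) / sqrt (E - (x ^ 2 / 2 - 1) ^ 2).

Definition lower_lim (E : R) : R := sqrt (Rmax (2 - 2 * sqrt E) 0).
Definition upper_lim (E : R) : R := sqrt (2 + 2 * sqrt E).

(* F(E) as an improper (generalized Riemann) integral over the open interval
   (lower_lim E, upper_lim E): the integrand is singular at the endpoints. *)
Definition F (E : R) : R :=
  RInt_gen (integrand E) (at_right (lower_lim E)) (at_left (upper_lim E)).

From Stdlib Require Import Reals Lra Ranalysis5.
From Coquelicot Require Import Coquelicot.
Open Scope R_scope.

(* For E > 1 the substitution x = sqrt (2 + 2 sqrt E) sin t, and for 0 < E < 1 the
   substitution x^2 = 2 + 2 sqrt E sin t, turn F E into a proper integral of a smooth
   integrand in which s = sqrt E only enters as a parameter: F E = Kp s resp. Km s.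
   For E < 1 the integrand Gm s lies strictly above its tangent line as a function of
   Dm s t = 2 + 2 s sin t; that tangent line is odd in t, so Km s > 0.  For E > 1,
   differentiating under the integral sign gives a negative integrand, so F' < 0.
   As s -> 1 both integrands are bounded below, up to an additive constant, by
   1 / sqrt ((t - t0)^2 + |s - 1|) for an endpoint t0, whose integral is about
   -ln |s - 1| / 2, so F blows up at E = 1; for large s,
   Gp s t <= 3 - 2 sqrt s sin t ^ 2, so F -> -oo.  Monotonicity and the intermediate
   value theorem then give the unique zero. *)

Lemma ex_derive_continuous_R (f : R -> R) x : ex_derive f x -> continuous f x.
Proof. exact (ex_derive_continuous f x). Qed.

Ltac continuous_by_derive :=
  apply ex_derive_continuous_R; auto_derive.

Lemma sqr_lt_of_lt_sqrt x y : 0 <= x -> x < sqrt y -> x * x < y.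
Proof. intros Hx H. apply sqrt_lt_0_alt. now rewrite sqrt_square. Qed.

Lemma sqr_gt_of_sqrt_lt x y : sqrt y < x -> y < x * x.
Proof.
  intros H. pose proof (sqrt_pos y).
  apply sqrt_lt_0_alt. rewrite sqrt_square; lra.
Qed.

Lemma sqrt_gt_1 x : 1 < x -> 1 < sqrt x.
Proof. intros Hx. rewrite <- sqrt_1. apply sqrt_lt_1_alt. lra. Qed.

Lemma sqrt_lt_1_pos x : 0 < x < 1 -> 0 < sqrt x < 1.
Proof.
  intros Hx. split; [apply sqrt_lt_R0; lra|].
  rewrite <- sqrt_1. apply sqrt_lt_1_alt. lra.
Qed.

Lemma sin_sqr_le_1 t : 0 <= sin t * sin t <= 1.
Proof.
  pose proof (sin2_cos2 t). pose proof (Rle_0_sqr (cos t)).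
  pose proof (Rle_0_sqr (sin t)). unfold Rsqr in *. lra.
Qed.

Lemma sin_sqr_lt_1 t : -(PI/2) < t < PI/2 -> sin t * sin t < 1.
Proof.
  intros Ht. pose proof (cos_gt_0 t ltac:(lra) ltac:(lra)).
  pose proof (sin2_cos2 t). unfold Rsqr in *. nra.
Qed.

Lemma asin_le_of_le_sin y t :
  -1 <= y <= 1 -> -(PI/2) <= t <= PI/2 -> y <= sin t -> asin y <= t.
Proof.
  intros Hy Ht H. pose proof (asin_bound y).
  apply sin_incr_0; try lra. now rewrite sin_asin.
Qed.

Lemma le_asin_of_sin_le y t :
  -1 <= y <= 1 -> -(PI/2) <= t <= PI/2 -> sin t <= y -> t <= asin y.
Proof.
  intros Hy Ht H. pose proof (asin_bound y).
  apply sin_incr_0; try lra. now rewrite sin_asin.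
Qed.

Lemma at_right_interval a d : 0 < d -> at_right a (fun x => a < x < a + d).
Proof.
  intros Hd. exists (mkposreal d Hd). intros x Hx Hax.
  apply Rabs_lt_between' in Hx. simpl in Hx. lra.
Qed.

Lemma at_left_interval b d : 0 < d -> at_left b (fun x => b - d < x < b).
Proof.
  intros Hd. exists (mkposreal d Hd). intros x Hx Hxb.
  apply Rabs_lt_between' in Hx. simpl in Hx. lra.
Qed.

Lemma bounded_of_continuous_on (h : R -> R) lo hi :
  lo <= hi -> (forall t, lo <= t <= hi -> continuous h t) ->
  exists M, forall t, lo <= t <= hi -> Rabs (h t) <= M.
Proof.
  intros Hlh Hc.
  destruct (continuity_ab_maj (fun t => Rabs (h t)) lo hi Hlh) as [m [Hm _]].
  - intros c Hcin. apply continuity_pt_filterlim.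
    apply continuous_Rabs_comp. now apply Hc.
  - now exists (Rabs (h m)).
Qed.

Lemma abs_RInt_sub_ends (h : R -> R) lo hi u v M :
  (forall t, lo <= t <= hi -> continuous h t) ->
  (forall t, lo <= t <= hi -> Rabs (h t) <= M) ->
  lo <= u <= hi -> lo <= v <= hi ->
  Rabs (RInt h u v - RInt h lo hi) <= ((u - lo) + (hi - v)) * M.
Proof.
  intros Hc Hb Hu Hv.
  assert (Hex : forall x y, lo <= x <= hi -> lo <= y <= hi -> ex_RInt h x y).
  { intros x y Hx Hy. apply (ex_RInt_continuous (V := R_CompleteNormedModule)).
    intros z Hz. apply Hc. split.
    - apply Rle_trans with (Rmin x y); [apply Rmin_glb|]; lra.
    - apply Rle_trans with (Rmax x y); [|apply Rmax_lub]; lra. }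
  assert (Hend : forall x y, lo <= x <= y -> y <= hi -> Rabs (RInt h x y) <= (y - x) * M).
  { intros x y Hxy Hy. apply abs_RInt_le_const; [lra| apply Hex; lra|].
    intros t Ht. apply Hb. lra. }
  rewrite <- (RInt_Chasles h lo u hi), <- (RInt_Chasles h u v hi) by (apply Hex; lra).
  replace (RInt h u v - plus (RInt h lo u) (plus (RInt h u v) (RInt h v hi)))
    with (- (RInt h lo u + RInt h v hi)) by (unfold plus; simpl; ring).
  rewrite Rabs_Ropp. eapply Rle_trans; [apply Rabs_triang|].
  pose proof (Hend lo u ltac:(lra) ltac:(lra)). pose proof (Hend v hi ltac:(lra) ltac:(lra)).
  lra.
Qed.

Lemma is_RInt_gen_change_of_var (f h psi : R -> R) (a b lo hi : R) :
  a < b -> lo < hi ->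
  (forall t, lo <= t <= hi -> continuous h t) ->
  (forall x1 x2, a < x1 < b -> a < x2 < b -> is_RInt f x1 x2 (RInt h (psi x1) (psi x2))) ->
  (forall x, a < x < b -> lo <= psi x <= hi) ->
  (forall d, 0 < d < hi - lo -> at_right a (fun x => psi x <= lo + d)) ->
  (forall d, 0 < d < hi - lo -> at_left b (fun x => hi - d <= psi x)) ->
  is_RInt_gen f (at_right a) (at_left b) (RInt h lo hi).
Proof.
  intros Hab Hlh Hc Hf Hpsi Hlo Hhi P [eps HP].
  destruct (bounded_of_continuous_on h lo hi) as [M HM]; [lra| exact Hc|].
  assert (HM0 : 0 <= M) by (specialize (HM lo ltac:(lra)); pose proof (Rabs_pos (h lo)); lra).
  set (d := Rmin (eps / (2 * (M + 1))) ((hi - lo) / 2)).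
  assert (Hd : 0 < d < hi - lo).
  { pose proof (cond_pos eps). split.
    - apply Rmin_glb_lt; apply Rdiv_lt_0_compat; lra.
    - apply Rle_lt_trans with ((hi - lo) / 2); [apply Rmin_r| lra]. }
  assert (HdM : 2 * d * M < eps).
  { assert (d * (M + 1) <= eps / 2).
    { apply Rle_trans with (eps / (2 * (M + 1)) * (M + 1)).
      - apply Rmult_le_compat_r; [lra| apply Rmin_l].
      - right. field. lra. }
    pose proof (cond_pos eps). nra. }
  apply (Filter_prod _ _ _ (fun x => a < x < b /\ psi x <= lo + d)
                           (fun x => a < x < b /\ hi - d <= psi x)).
  - apply filter_and; [| now apply Hlo].
    apply (filter_imp (fun x => a < x < a + (b - a))); [intros; lra|].
    apply at_right_interval. lra.
  - apply filter_and; [| now apply Hhi].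
    apply (filter_imp (fun x => b - (b - a) < x < b)); [intros; lra|].
    apply at_left_interval. lra.
  - intros x1 x2 [H1 H1'] [H2 H2']. simpl.
    exists (RInt h (psi x1) (psi x2)). split; [now apply Hf|].
    apply HP. change (Rabs (RInt h (psi x1) (psi x2) - RInt h lo hi) < eps).
    pose proof (Hpsi x1 H1). pose proof (Hpsi x2 H2).
    eapply Rle_lt_trans; [apply (abs_RInt_sub_ends h lo hi); eauto; lra|].
    nra.
Qed.

Lemma is_RInt_change_of_var (f G g dg : R -> R) al be x1 x2 :
  g al = x1 -> g be = x2 ->
  (forall t, Rmin al be <= t <= Rmax al be ->
     is_derive g t (dg t) /\ continuous dg t /\ continuous f (g t) /\ G t = dg t * f (g t)) ->
  (forall z, Rmin x1 x2 <= z <= Rmax x1 x2 -> continuous f z) ->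
  is_RInt f x1 x2 (RInt G al be).
Proof.
  intros <- <- Ht Hf.
  rewrite (RInt_ext G (fun t => scal (dg t) (f (g t)))).
  - rewrite (RInt_comp f g dg) by (intros t Htin; specialize (Ht t Htin); tauto).
    apply (RInt_correct (V := R_CompleteNormedModule)).
    now apply (ex_RInt_continuous (V := R_CompleteNormedModule)).
  - intros t Htin. apply Ht. lra.
Qed.

Lemma Rmin_Rmax_open_interval lo hi u v t :
  lo < u < hi -> lo < v < hi -> Rmin u v <= t <= Rmax u v -> lo < t < hi.
Proof.
  intros Hu Hv [Ht1 Ht2]. split.
  - apply Rlt_le_trans with (Rmin u v); [apply Rmin_glb_lt|]; lra.
  - apply Rle_lt_trans with (Rmax u v); [|apply Rmax_lub_lt]; lra.
Qed.

Lemma integrand_continuous E x :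
  0 < E - (x ^ 2 / 2 - 1) ^ 2 -> continuous (integrand E) x.
Proof.
  intros H. unfold integrand. continuous_by_derive.
  match goal with |- 0 < ?X /\ _ => replace X with (E - (x ^ 2 / 2 - 1) ^ 2) by (simpl; field) end.
  repeat split; [exact H| apply Rgt_not_eq, sqrt_lt_R0, H].
Qed.

Lemma integrand_radicand_pos s z :
  0 < s -> 2 - 2 * s < z * z < 2 + 2 * s -> 0 < s * s - (z ^ 2 / 2 - 1) ^ 2.
Proof.
  intros Hs Hz.
  replace (s * s - (z ^ 2 / 2 - 1) ^ 2)
    with ((s - (z * z / 2 - 1)) * (s + (z * z / 2 - 1))) by field.
  apply Rmult_lt_0_compat; lra.
Qed.

(** * The substitutions *)

(* For E = s^2 > 1, the substitution x = sqrt (2 + 2 s) sin t maps [0, PI/2]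
   onto [0, upper_lim E] and turns integrand E x dx into Gp s t dt. *)
Definition Dp (s t : R) := 2 * (1 + s) * (sin t * sin t) + 2 * s - 2.
Definition Gp (s t : R) := 4 * s / sqrt (Dp s t) - 2 * sqrt (Dp s t).
Definition Kp (s : R) := RInt (Gp s) 0 (PI / 2).

Lemma Dp_bounds s t : 1 < s -> 2 * s - 2 <= Dp s t <= 4 * s.
Proof. intros Hs. unfold Dp. pose proof (sin_sqr_le_1 t). nra. Qed.

Lemma Dp_pos s t : 1 < s -> 0 < Dp s t.
Proof. intros Hs. pose proof (Dp_bounds s t Hs). lra. Qed.

Lemma Gp_continuous s t : 1 < s -> continuous (Gp s) t.
Proof.
  intros Hs. pose proof (Dp_pos s t Hs) as HD. unfold Gp, Dp in *.
  continuous_by_derive. repeat split; try lra; apply Rgt_not_eq, sqrt_lt_R0; lra.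
Qed.

Lemma Gp_subst s t : 1 < s -> 0 < cos t ->
  sqrt (2 + 2 * s) * cos t * integrand (s * s) (sqrt (2 + 2 * s) * sin t) = Gp s t.
Proof.
  intros Hs Hc.
  set (b := sqrt (2 + 2 * s)).
  assert (Hb : 0 < b) by (apply sqrt_lt_R0; lra).
  assert (Hbb : b * b = 2 + 2 * s) by (apply sqrt_sqrt; lra).
  pose proof (Dp_pos s t Hs) as HD.
  set (q := sqrt (Dp s t)).
  assert (Hq : 0 < q) by (apply sqrt_lt_R0; lra).
  assert (Hqq : q * q = Dp s t) by (apply sqrt_sqrt; lra).
  assert (Hsc : sin t * sin t + cos t * cos t = 1)
    by (pose proof (sin2_cos2 t); unfold Rsqr in *; lra).
  assert (Hrad : (b * cos t * q / 2) * (b * cos t * q / 2)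
                 = s * s - ((b * sin t) ^ 2 / 2 - 1) ^ 2).
  { replace ((b * cos t * q / 2) * (b * cos t * q / 2))
      with (b * b * (cos t * cos t) * (q * q) / 4) by field.
    replace ((b * sin t) ^ 2) with (b * b * (sin t * sin t)) by ring.
    rewrite Hbb, Hqq. unfold Dp.
    replace (cos t * cos t) with (1 - sin t * sin t) by lra. field. }
  unfold integrand, Gp. fold q.
  rewrite (sqrt_lem_1 _ (b * cos t * q / 2)).
  - replace ((b * sin t) ^ 2) with (b * b * (sin t * sin t)) by ring.
    rewrite Hbb. field_simplify; [| lra| lra].
    replace (q ^ 2) with (q * q) by ring. rewrite Hqq. unfold Dp. field. lra.
  - rewrite <- Hrad. apply Rle_0_sqr.
  - assert (0 < b * cos t * q) by (repeat apply Rmult_lt_0_compat; lra). lra.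
  - exact Hrad.
Qed.

Lemma asin_div_near_0 b d : 0 < b -> 0 < d < PI / 2 ->
  at_right 0 (fun x => asin (x / b) <= d).
Proof.
  intros Hb Hd.
  assert (Hsd : 0 < sin d) by (apply sin_gt_0; lra).
  pose proof (SIN_bound d).
  apply (filter_imp (fun x => 0 < x < 0 + b * sin d)).
  - intros x Hx.
    assert (0 < x / b <= sin d) by (split; [apply Rdiv_lt_0_compat| apply Rle_div_l]; nra).
    apply asin_le_of_le_sin; lra.
  - apply at_right_interval. nra.
Qed.

Lemma asin_div_near_1 b d : 0 < b -> 0 < d < PI / 2 ->
  at_left b (fun x => PI / 2 - d <= asin (x / b)).
Proof.
  intros Hb Hd.
  assert (Hcd : 0 < cos d < 1).
  { split; [apply cos_gt_0; lra| rewrite <- cos_0; apply cos_decreasing_1; lra]. }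
  apply (filter_imp (fun x => b - b * (1 - cos d) < x < b)).
  - intros x Hx.
    assert (cos d <= x / b < 1) by (split; [apply Rle_div_r| apply Rlt_div_l]; nra).
    apply le_asin_of_sin_le; [lra| lra|]. rewrite sin_shift. lra.
  - apply at_left_interval. nra.
Qed.

Lemma is_RInt_integrand_gt_1 s x1 x2 :
  1 < s -> 0 < x1 < sqrt (2 + 2 * s) -> 0 < x2 < sqrt (2 + 2 * s) ->
  is_RInt (integrand (s * s)) x1 x2
    (RInt (Gp s) (asin (x1 / sqrt (2 + 2 * s))) (asin (x2 / sqrt (2 + 2 * s)))).
Proof.
  intros Hs Hx1 Hx2.
  set (b := sqrt (2 + 2 * s)) in *.
  assert (Hb : 0 < b) by (apply sqrt_lt_R0; lra).
  assert (Hbb : b * b = 2 + 2 * s) by (apply sqrt_sqrt; lra).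
  assert (Hratio : forall x, 0 < x < b -> -1 < x / b < 1).
  { intros x Hx. assert (0 < x / b) by (apply Rdiv_lt_0_compat; lra).
    split; [lra| apply Rlt_div_l; nra]. }
  assert (Hpsi : forall x, 0 < x < b -> -(PI / 2) < asin (x / b) < PI / 2)
    by (intros x Hx; now apply asin_bound_lt, Hratio).
  apply (is_RInt_change_of_var _ _ (fun t => b * sin t) (fun t => b * cos t)).
  - rewrite sin_asin by (pose proof (Hratio x1 Hx1); lra). field. lra.
  - rewrite sin_asin by (pose proof (Hratio x2 Hx2); lra). field. lra.
  - intros t Ht.
    pose proof (Rmin_Rmax_open_interval _ _ _ _ t (Hpsi x1 Hx1) (Hpsi x2 Hx2) Ht) as Ht'.
    pose proof (sin_sqr_lt_1 t Ht').
    assert (Hcos : 0 < cos t) by (apply cos_gt_0; lra).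
    split; [|split; [|split]].
    + auto_derive; [easy| ring].
    + continuous_by_derive. easy.
    + apply integrand_continuous, integrand_radicand_pos; [lra|].
      replace ((b * sin t) * (b * sin t)) with (b * b * (sin t * sin t)) by ring.
      rewrite Hbb. nra.
    + unfold b. now rewrite Gp_subst.
  - intros z Hz.
    pose proof (Rmin_Rmax_open_interval 0 b _ _ z Hx1 Hx2 Hz).
    apply integrand_continuous, integrand_radicand_pos; [lra|].
    split; [nra|]. rewrite <- Hbb. nra.
Qed.

Lemma F_eq_Kp E : 1 < E -> F E = Kp (sqrt E).
Proof.
  intros HE.
  set (s := sqrt E).
  assert (Hs : 1 < s) by now apply sqrt_gt_1.
  assert (Hss : E = s * s) by (symmetry; apply sqrt_sqrt; lra).
  set (b := sqrt (2 + 2 * s)).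
  assert (Hb : 0 < b) by (apply sqrt_lt_R0; lra).
  assert (Hlow : lower_lim E = 0).
  { unfold lower_lim. rewrite Rmax_right; [apply sqrt_0| fold s; lra]. }
  pose proof PI_RGT_0.
  unfold F, Kp. rewrite Hlow. unfold upper_lim. fold s b. rewrite Hss.
  apply is_RInt_gen_unique.
  apply (is_RInt_gen_change_of_var _ _ (fun x => asin (x / b)) 0 b 0 (PI / 2)); [lra| lra| | | | |].
  - intros t _. now apply Gp_continuous.
  - intros x1 x2 Hx1 Hx2. now apply is_RInt_integrand_gt_1.
  - intros x Hx.
    assert (0 < x / b < 1) by (split; [apply Rdiv_lt_0_compat| apply Rlt_div_l]; nra).
    split; [| apply asin_bound].
    apply le_asin_of_sin_le; [lra| lra|]. rewrite sin_0. lra.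
  - intros d Hd. rewrite Rplus_0_l. apply asin_div_near_0; lra.
  - intros d Hd. apply asin_div_near_1; lra.
Qed.

(* For E = s^2 < 1, the substitution x^2 = 2 + 2 s sin t maps [-PI/2, PI/2]
   onto [lower_lim E, upper_lim E] and turns integrand E x dx into Gm s t dt. *)
Definition Dm (s t : R) := 2 + 2 * s * sin t.
Definition Gm (s t : R) := 2 / sqrt (Dm s t) - sqrt (Dm s t).
Definition Km (s : R) := RInt (Gm s) (-(PI / 2)) (PI / 2).

Lemma Dm_bounds s t : 0 <= s -> 2 - 2 * s <= Dm s t <= 2 + 2 * s.
Proof. intros Hs. unfold Dm. pose proof (SIN_bound t). nra. Qed.

Lemma Dm_pos s t : 0 <= s < 1 -> 0 < Dm s t.
Proof. intros Hs. pose proof (Dm_bounds s t (proj1 Hs)). lra. Qed.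

Lemma Gm_continuous s t : 0 <= s < 1 -> continuous (Gm s) t.
Proof.
  intros Hs. pose proof (Dm_pos s t Hs) as HD. unfold Gm, Dm in *.
  continuous_by_derive. repeat split; try lra; apply Rgt_not_eq, sqrt_lt_R0; lra.
Qed.

Lemma Gm_subst s t : 0 < s < 1 -> 0 < cos t ->
  s * cos t / sqrt (Dm s t) * integrand (s * s) (sqrt (Dm s t)) = Gm s t.
Proof.
  intros Hs Hc.
  pose proof (Dm_pos s t ltac:(lra)) as HD.
  set (q := sqrt (Dm s t)).
  assert (Hq : 0 < q) by (apply sqrt_lt_R0; lra).
  assert (Hqq : q * q = Dm s t) by (apply sqrt_sqrt; lra).
  assert (Hrad : (s * cos t) * (s * cos t) = s * s - (q ^ 2 / 2 - 1) ^ 2).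
  { replace (q ^ 2) with (q * q) by ring. rewrite Hqq. unfold Dm.
    pose proof (sin2_cos2 t) as H. unfold Rsqr in H.
    replace ((s * cos t) * (s * cos t)) with (s * s * (cos t * cos t)) by ring.
    replace (cos t * cos t) with (1 - sin t * sin t) by lra. field. }
  unfold integrand, Gm. fold q.
  rewrite (sqrt_lem_1 _ (s * cos t)).
  - field. split; lra.
  - rewrite <- Hrad. apply Rle_0_sqr.
  - apply Rmult_le_pos; lra.
  - exact Hrad.
Qed.

Lemma sqr_ratio_bounds s x : 0 < s < 1 ->
  sqrt (2 - 2 * s) < x < sqrt (2 + 2 * s) ->
  2 - 2 * s < x * x < 2 + 2 * s /\ -1 < (x * x - 2) / (2 * s) < 1.
Proof.
  intros Hs Hx. pose proof (sqrt_pos (2 - 2 * s)).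
  assert (Hsqr : 2 - 2 * s < x * x < 2 + 2 * s).
  { split; [apply sqr_gt_of_sqrt_lt| apply sqr_lt_of_lt_sqrt]; lra. }
  split; [exact Hsqr|].
  split; [apply Rlt_div_r| apply Rlt_div_l]; lra.
Qed.

Lemma asin_sqr_ratio_near_lower s d : 0 < s < 1 -> 0 < d < PI ->
  at_right (sqrt (2 - 2 * s))
    (fun x => asin ((x * x - 2) / (2 * s)) <= -(PI / 2) + d).
Proof.
  intros Hs Hd.
  assert (Hcd : -1 < cos d < 1).
  { rewrite <- cos_0, <- cos_PI. split; apply cos_decreasing_1; lra. }
  pose proof (sqrt_pos (2 - 2 * s)).
  assert (sqrt (2 - 2 * s) < sqrt (2 - 2 * s * cos d) < sqrt (2 + 2 * s))
    by (split; apply sqrt_lt_1_alt; nra).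
  apply (filter_imp (fun x => sqrt (2 - 2 * s) < x
                              < sqrt (2 - 2 * s) + (sqrt (2 - 2 * s * cos d) - sqrt (2 - 2 * s)))).
  - intros x Hx. destruct (sqr_ratio_bounds s x Hs ltac:(lra)) as [_ Hr].
    assert (x * x < 2 - 2 * s * cos d) by (apply sqr_lt_of_lt_sqrt; lra).
    apply asin_le_of_le_sin; [lra| lra|].
    replace (-(PI / 2) + d) with (- (PI / 2 - d)) by ring.
    rewrite sin_neg, sin_shift. apply Rle_div_l; nra.
  - apply at_right_interval. lra.
Qed.

Lemma asin_sqr_ratio_near_upper s d : 0 < s < 1 -> 0 < d < PI ->
  at_left (sqrt (2 + 2 * s))
    (fun x => PI / 2 - d <= asin ((x * x - 2) / (2 * s))).
Proof.
  intros Hs Hd.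
  assert (Hcd : -1 < cos d < 1).
  { rewrite <- cos_0, <- cos_PI. split; apply cos_decreasing_1; lra. }
  assert (sqrt (2 - 2 * s) < sqrt (2 + 2 * s * cos d) < sqrt (2 + 2 * s))
    by (split; apply sqrt_lt_1_alt; nra).
  apply (filter_imp (fun x => sqrt (2 + 2 * s) - (sqrt (2 + 2 * s) - sqrt (2 + 2 * s * cos d)) < x
                              < sqrt (2 + 2 * s))).
  - intros x Hx. destruct (sqr_ratio_bounds s x Hs ltac:(lra)) as [_ Hr].
    assert (2 + 2 * s * cos d < x * x) by (apply sqr_gt_of_sqrt_lt; lra).
    apply le_asin_of_sin_le; [lra| lra|].
    rewrite sin_shift. apply Rle_div_r; nra.
  - apply at_left_interval. lra.
Qed.

Lemma is_RInt_integrand_lt_1 s x1 x2 : 0 < s < 1 ->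
  sqrt (2 - 2 * s) < x1 < sqrt (2 + 2 * s) -> sqrt (2 - 2 * s) < x2 < sqrt (2 + 2 * s) ->
  is_RInt (integrand (s * s)) x1 x2
    (RInt (Gm s) (asin ((x1 * x1 - 2) / (2 * s))) (asin ((x2 * x2 - 2) / (2 * s)))).
Proof.
  intros Hs Hx1 Hx2.
  pose proof (sqr_ratio_bounds s x1 Hs Hx1) as [Hsq1 Hr1].
  pose proof (sqr_ratio_bounds s x2 Hs Hx2) as [Hsq2 Hr2].
  assert (Hg : forall x, sqrt (2 - 2 * s) < x < sqrt (2 + 2 * s) ->
                 sqrt (Dm s (asin ((x * x - 2) / (2 * s)))) = x).
  { intros x Hx. pose proof (sqr_ratio_bounds s x Hs Hx) as [_ Hr].
    pose proof (sqrt_pos (2 - 2 * s)).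
    unfold Dm. rewrite sin_asin by lra.
    replace (2 + 2 * s * ((x * x - 2) / (2 * s))) with (x * x) by (field; lra).
    apply sqrt_square. lra. }
  apply (is_RInt_change_of_var _ _ (fun t => sqrt (Dm s t)) (fun t => s * cos t / sqrt (Dm s t)));
    [now apply Hg| now apply Hg| |].
  - intros t Ht.
    pose proof (Rmin_Rmax_open_interval _ _ _ _ t (asin_bound_lt _ Hr1) (asin_bound_lt _ Hr2) Ht).
    pose proof (sin_sqr_lt_1 t ltac:(lra)).
    assert (Hcos : 0 < cos t) by (apply cos_gt_0; lra).
    pose proof (Dm_pos s t ltac:(lra)) as HD.
    split; [|split; [|split]].
    + unfold Dm in *. auto_derive; [repeat split; lra|].
      field. apply Rgt_not_eq, sqrt_lt_R0; lra.
    + unfold Dm in *. continuous_by_derive.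
      repeat split; try lra; apply Rgt_not_eq, sqrt_lt_R0; lra.
    + apply integrand_continuous, integrand_radicand_pos; [lra|].
      assert (-1 < sin t < 1) by (split; nra).
      rewrite sqrt_sqrt by lra. unfold Dm. nra.
    + now rewrite Gm_subst.
  - intros z Hz.
    pose proof (Rmin_Rmax_open_interval _ _ _ _ z Hx1 Hx2 Hz) as Hz'.
    apply integrand_continuous, integrand_radicand_pos; [lra|].
    now apply sqr_ratio_bounds.
Qed.

Lemma F_eq_Km E : 0 < E < 1 -> F E = Km (sqrt E).
Proof.
  intros HE.
  set (s := sqrt E).
  assert (Hs : 0 < s < 1) by now apply sqrt_lt_1_pos.
  assert (Hss : E = s * s) by (symmetry; apply sqrt_sqrt; lra).
  assert (Hab : sqrt (2 - 2 * s) < sqrt (2 + 2 * s)) by (apply sqrt_lt_1_alt; lra).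
  assert (Hlow : lower_lim E = sqrt (2 - 2 * s)).
  { unfold lower_lim. rewrite Rmax_left; [reflexivity| fold s; lra]. }
  pose proof PI_RGT_0.
  unfold F, Km. rewrite Hlow. unfold upper_lim. fold s. rewrite Hss.
  apply is_RInt_gen_unique.
  apply (is_RInt_gen_change_of_var _ _ (fun x => asin ((x * x - 2) / (2 * s)))
           _ _ (-(PI / 2)) (PI / 2)); [lra| lra| | | | |].
  - intros t _. apply Gm_continuous. lra.
  - intros x1 x2 Hx1 Hx2. now apply is_RInt_integrand_lt_1.
  - intros x Hx. apply asin_bound.
  - intros d Hd. apply asin_sqr_ratio_near_lower; lra.
  - intros d Hd. apply asin_sqr_ratio_near_upper; lra.
Qed.

(** * Positivity below E = 1 *)

Lemma RInt_lt_except_point (f g : R -> R) a m b :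
  a < m < b ->
  (forall x, a <= x <= b -> continuous f x) ->
  (forall x, a <= x <= b -> continuous g x) ->
  (forall x, a < x < b -> x <> m -> f x < g x) ->
  RInt f a b < RInt g a b.
Proof.
  intros Hm Hf Hg Hfg.
  assert (Hex : forall h : R -> R, (forall x, a <= x <= b -> continuous h x) ->
                  forall u v, a <= u <= v -> v <= b -> ex_RInt h u v).
  { intros h Hh u v Huv Hv. apply (ex_RInt_continuous (V := R_CompleteNormedModule)).
    intros x Hx. rewrite Rmin_left, Rmax_right in Hx by lra. apply Hh. lra. }
  rewrite <- (RInt_Chasles f a m b), <- (RInt_Chasles g a m b) by (apply Hex; auto; lra).
  unfold plus; simpl.
  apply Rplus_lt_compat; apply RInt_lt; try lra;
    intros x Hx; (apply Hf || apply Hg || apply Hfg); lra.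
Qed.

Lemma RInt_sin_symmetric : RInt sin (-(PI / 2)) (PI / 2) = 0.
Proof.
  apply is_RInt_unique.
  replace 0 with (minus ((fun t => - cos t) (PI / 2)) ((fun t => - cos t) (-(PI / 2)))).
  - apply (is_RInt_derive (fun t => - cos t)).
    + intros x _. auto_derive; [easy| ring].
    + intros x _. continuous_by_derive. easy.
  - unfold minus, plus, opp; simpl. rewrite cos_neg, cos_PI2. ring.
Qed.

(* The gap is (sqrt 2 - sqrt D)^2 (sqrt 2 + sqrt D) / (sqrt 2 sqrt D): the left-hand side
   is the tangent line at D = 2 of the convex function D |-> 2 / sqrt D - sqrt D. *)
Lemma tangent_lt_inv_sqrt_sub_sqrt D :
  0 < D -> D <> 2 -> (2 - D) / sqrt 2 < 2 / sqrt D - sqrt D.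
Proof.
  intros HD HD2.
  set (q := sqrt D). set (r := sqrt 2).
  assert (Hq : 0 < q) by (apply sqrt_lt_R0; lra).
  assert (Hr : 0 < r) by (apply sqrt_lt_R0; lra).
  assert (Hqq : q * q = D) by (apply sqrt_sqrt; lra).
  assert (Hrr : r * r = 2) by (apply sqrt_sqrt; lra).
  assert (Hqr : q <> r) by (intros Heq; apply HD2; rewrite <- Hqq, <- Hrr, Heq; ring).
  assert (Hgap : 2 / q - q - (2 - D) / r = (r - q) * (r - q) * (r + q) / (q * r)).
  { rewrite <- Hqq, <- Hrr. field. lra. }
  assert (0 < (r - q) * (r - q) * (r + q) / (q * r)).
  { apply Rdiv_lt_0_compat; [apply Rmult_lt_0_compat|]; nra. }
  lra.
Qed.

Lemma Km_pos s : 0 < s < 1 -> 0 < Km s.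
Proof.
  intros Hs. pose proof PI_RGT_0.
  set (c := fun t => - (2 * s / sqrt 2) * sin t).
  assert (Hc0 : RInt c (-(PI / 2)) (PI / 2) = 0).
  { unfold c. rewrite (RInt_scal (V := R_CompleteNormedModule) sin).
    - rewrite RInt_sin_symmetric. unfold scal; simpl; unfold mult; simpl. ring.
    - apply (ex_RInt_continuous (V := R_CompleteNormedModule)).
      intros; continuous_by_derive; easy. }
  unfold Km. rewrite <- Hc0.
  apply (RInt_lt_except_point _ _ _ 0); [lra| | |].
  - intros; unfold c; continuous_by_derive; easy.
  - intros; apply Gm_continuous; lra.
  - intros t Ht Ht0.
    assert (Hsin : sin t <> 0).
    { intros H0. apply Ht0. rewrite <- (asin_sin t) by lra. now rewrite H0, asin_0. }
    assert (Hsq : sqrt 2 <> 0) by (apply Rgt_not_eq, sqrt_lt_R0; lra).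
    replace (c t) with ((2 - Dm s t) / sqrt 2) by (unfold c, Dm; field; exact Hsq).
    apply tangent_lt_inv_sqrt_sub_sqrt; [apply Dm_pos; lra|].
    unfold Dm. intros H2. apply Hsin. nra.
Qed.

Lemma F_pos_lt_1 E : 0 < E < 1 -> 0 < F E.
Proof. intros HE. rewrite F_eq_Km by exact HE. now apply Km_pos, sqrt_lt_1_pos. Qed.

(** * Blow-up at E = 1 *)

Lemma ln_sqrt x : 0 < x -> ln (sqrt x) = ln x / 2.
Proof.
  intros Hx. rewrite <- (sqrt_sqrt x) at 2 by lra.
  rewrite ln_mult by (apply sqrt_lt_R0; lra). field.
Qed.

Lemma inv_sqrt_shift_continuous a e t :
  0 < e -> continuous (fun t => / sqrt ((t - a) ^ 2 + e)) t.
Proof.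
  intros He. pose proof (pow2_ge_0 (t - a)).
  continuous_by_derive.
  match goal with |- 0 < ?X /\ _ => replace X with ((t - a) ^ 2 + e) by (simpl; field) end.
  repeat split; try lra. apply Rgt_not_eq, sqrt_lt_R0. lra.
Qed.

(* An antiderivative is ln ((t - a) + sqrt ((t - a)^2 + e)), i.e. a shifted arsinh. *)
Lemma RInt_inv_sqrt_shift_ge_ln a b e : 0 < e -> a + 1 <= b ->
  - ln e / 2 <= RInt (fun t => / sqrt ((t - a) ^ 2 + e)) a b.
Proof.
  intros He Hab.
  set (P := fun t => ln ((t - a) + sqrt ((t - a) ^ 2 + e))).
  assert (Hrad : forall t, 0 < (t - a) ^ 2 + e) by (intros t; pose proof (pow2_ge_0 (t - a)); lra).
  assert (Hpos : forall t, 0 < (t - a) + sqrt ((t - a) ^ 2 + e)).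
  { intros t. assert (Rabs (t - a) < sqrt ((t - a) ^ 2 + e)).
    { rewrite <- sqrt_Rsqr_abs. apply sqrt_lt_1_alt. split; [apply Rle_0_sqr|].
      unfold Rsqr. simpl. lra. }
    pose proof (Rle_abs (- (t - a))). rewrite Rabs_Ropp in *. lra. }
  assert (HI : is_RInt (fun t => / sqrt ((t - a) ^ 2 + e)) a b (minus (P b) (P a))).
  { apply (is_RInt_derive P).
    - intros t _. unfold P.
      pose proof (Hrad t) as Hr. pose proof (Hpos t) as Hp.
      assert (Hq : 0 < sqrt ((t - a) ^ 2 + e)) by (apply sqrt_lt_R0; lra).
      assert (Hqq : sqrt ((t - a) ^ 2 + e) * sqrt ((t - a) ^ 2 + e) = (t - a) ^ 2 + e)
        by (apply sqrt_sqrt; lra).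
      auto_derive.
      + replace ((t + - a) * ((t + - a) * 1) + e) with ((t - a) ^ 2 + e) by ring.
        repeat split; lra.
      + replace ((t + - a) * ((t + - a) * 1) + e) with ((t - a) ^ 2 + e) by ring.
        revert Hp Hq Hqq. generalize (sqrt ((t - a) ^ 2 + e)). intros q Hp Hq Hqq.
        field. lra.
    - intros t _. now apply inv_sqrt_shift_continuous. }
  rewrite (is_RInt_unique _ _ _ _ HI).
  change (minus (P b) (P a)) with (P b - P a). unfold P.
  rewrite Rminus_eq_0.
  replace (0 ^ 2 + e) with e by ring. rewrite Rplus_0_l, ln_sqrt by exact He.
  assert (0 <= ln (b - a + sqrt ((b - a) ^ 2 + e))).
  { rewrite <- ln_1. apply ln_le; [lra|]. pose proof (sqrt_pos ((b - a) ^ 2 + e)). lra. }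
  lra.
Qed.

Lemma RInt_ge_ln_of_ge_inv_sqrt (G : R -> R) a b e C :
  0 < e -> a + 1 <= b ->
  (forall t, a <= t <= b -> continuous G t) ->
  (forall t, a <= t <= b -> / sqrt ((t - a) ^ 2 + e) - C <= G t) ->
  - ln e / 2 - C * (b - a) <= RInt G a b.
Proof.
  intros He Hab HG Hlb.
  assert (Hex : ex_RInt (fun t => / sqrt ((t - a) ^ 2 + e)) a b).
  { apply (ex_RInt_continuous (V := R_CompleteNormedModule)).
    intros; now apply inv_sqrt_shift_continuous. }
  apply Rle_trans with (RInt (fun t => / sqrt ((t - a) ^ 2 + e) - C) a b).
  - rewrite (RInt_minus (V := R_CompleteNormedModule)) by (try apply ex_RInt_const; exact Hex).
    rewrite RInt_const. change (minus ?x (scal ?k ?c)) with (x - k * c).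
    pose proof (RInt_inv_sqrt_shift_ge_ln a b e He Hab). lra.
  - apply RInt_le; [lra| | |].
    + apply (ex_RInt_continuous (V := R_CompleteNormedModule)). intros z _.
      apply (continuous_minus (fun t => / sqrt ((t - a) ^ 2 + e)) (fun _ => C)).
      * now apply inv_sqrt_shift_continuous.
      * apply continuous_const.
    + apply (ex_RInt_continuous (V := R_CompleteNormedModule)).
      intros z Hz. apply HG. rewrite Rmin_left, Rmax_right in Hz; lra.
    + intros t Ht. apply Hlb. lra.
Qed.

Lemma sin_le_id x : 0 <= x -> sin x <= x.
Proof.
  intros Hx. destruct (Req_dec x 0) as [->|H0]; [rewrite sin_0; lra|].
  left. apply sin_lt_x. lra.
Qed.

Lemma one_sub_cos_le x : 0 <= x <= PI -> 0 <= 1 - cos x <= x * x / 2.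
Proof.
  intros Hx. replace x with (2 * (x / 2)) by field.
  rewrite cos_2a_sin.
  assert (0 <= sin (x / 2)) by (apply sin_ge_0; lra).
  pose proof (sin_le_id (x / 2) ltac:(lra)).
  split; nra.
Qed.

(* Dm s t = 2 (1 - s) + 2 s (1 - cos (t + PI/2)) <= 4 ((t + PI/2)^2 + 1 - s). *)
Lemma Gm_ge_inv_sqrt s t : 0 < s < 1 -> -(PI / 2) <= t <= PI / 2 ->
  / sqrt ((t - - (PI / 2)) ^ 2 + (1 - s)) - 2 <= Gm s t.
Proof.
  intros Hs Ht. pose proof PI_RGT_0.
  set (u := t - - (PI / 2)).
  assert (Hsin : sin t = - cos u).
  { unfold u. replace (t - - (PI / 2)) with (t + PI / 2) by ring.
    rewrite cos_plus, cos_PI2, sin_PI2. ring. }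
  pose proof (one_sub_cos_le u ltac:(unfold u; lra)).
  pose proof (Dm_bounds s t ltac:(lra)).
  pose proof (Dm_pos s t ltac:(lra)).
  assert (HD : Dm s t <= 4 * (u ^ 2 + (1 - s))).
  { unfold Dm. rewrite Hsin. replace (u ^ 2) with (u * u) by ring. nra. }
  set (w := sqrt (u ^ 2 + (1 - s))).
  assert (Hw : 0 < w) by (apply sqrt_lt_R0; pose proof (pow2_ge_0 u); lra).
  set (q := sqrt (Dm s t)).
  assert (Hq : 0 < q) by (apply sqrt_lt_R0; lra).
  assert (Hq2 : q <= 2) by (rewrite <- (sqrt_square 2) by lra; apply sqrt_le_1_alt; lra).
  assert (Hqw : q <= 2 * w).
  { rewrite <- (sqrt_square 2) by lra. unfold q, w.
    rewrite <- sqrt_mult_alt by lra. apply sqrt_le_1_alt. lra. }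
  assert (/ w <= 2 / q).
  { unfold Rdiv. apply Rmult_le_reg_r with (q * w); [nra|].
    field_simplify; lra. }
  unfold Gm. fold q. lra.
Qed.

(* Dp s t = 2 (1 + s) sin t ^ 2 + 2 (s - 1) <= 16 (t^2 + s - 1) when s <= 2. *)
Lemma Gp_ge_inv_sqrt s t : 1 < s <= 2 -> 0 <= t <= PI / 2 ->
  / sqrt (t ^ 2 + (s - 1)) - 6 <= Gp s t.
Proof.
  intros Hs Ht. pose proof PI_RGT_0.
  assert (0 <= sin t) by (apply sin_ge_0; lra).
  pose proof (sin_le_id t ltac:(lra)).
  pose proof (sin_sqr_le_1 t).
  pose proof (Dp_pos s t ltac:(lra)).
  assert (HD : Dp s t <= 16 * (t ^ 2 + (s - 1))).
  { unfold Dp. replace (t ^ 2) with (t * t) by ring. nra. }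
  assert (HD8 : Dp s t <= 8) by (unfold Dp; nra).
  set (w := sqrt (t ^ 2 + (s - 1))).
  assert (Hw : 0 < w) by (apply sqrt_lt_R0; pose proof (pow2_ge_0 t); lra).
  set (q := sqrt (Dp s t)).
  assert (Hq : 0 < q) by (apply sqrt_lt_R0; lra).
  assert (Hq3 : q <= 3) by (rewrite <- (sqrt_square 3) by lra; apply sqrt_le_1_alt; lra).
  assert (Hqw : q <= 4 * w).
  { rewrite <- (sqrt_square 4) by lra. unfold q, w.
    rewrite <- sqrt_mult_alt by lra. apply sqrt_le_1_alt. lra. }
  assert (/ w <= 4 * s / q).
  { unfold Rdiv. apply Rmult_le_reg_r with (q * w); [nra|].
    field_simplify; nra. }
  unfold Gp. fold q. lra.
Qed.

Lemma Km_ge_ln s : 0 < s < 1 -> - ln (1 - s) / 2 - 2 * PI <= Km s.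
Proof.
  intros Hs. pose proof PI2_1.
  replace (2 * PI) with (2 * (PI / 2 - - (PI / 2))) by field.
  apply RInt_ge_ln_of_ge_inv_sqrt; [lra| lra| |].
  - intros; apply Gm_continuous; lra.
  - intros; now apply Gm_ge_inv_sqrt.
Qed.

Lemma Kp_ge_ln s : 1 < s <= 2 -> - ln (s - 1) / 2 - 3 * PI <= Kp s.
Proof.
  intros Hs. pose proof PI2_1.
  replace (3 * PI) with (6 * (PI / 2 - 0)) by field.
  apply RInt_ge_ln_of_ge_inv_sqrt; [lra| lra| |].
  - intros; apply Gp_continuous; lra.
  - intros t Ht. rewrite Rminus_0_r. now apply Gp_ge_inv_sqrt.
Qed.

Lemma F_ge_ln_right E : 1 < E < 4 -> - ln (E - 1) / 2 - 3 * PI <= F E.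
Proof.
  intros HE. rewrite F_eq_Kp by lra.
  set (s := sqrt E).
  assert (Hs : 1 < s) by now apply sqrt_gt_1.
  assert (Hss : s * s = E) by (apply sqrt_sqrt; lra).
  assert (ln (s - 1) <= ln (E - 1)) by (apply ln_le; nra).
  pose proof (Kp_ge_ln s ltac:(nra)). lra.
Qed.

Lemma F_ge_ln_left E : 0 < E < 1 -> - ln (1 - E) / 2 - 2 * PI <= F E.
Proof.
  intros HE. rewrite F_eq_Km by lra.
  set (s := sqrt E).
  assert (Hs : 0 < s < 1) by now apply sqrt_lt_1_pos.
  assert (Hss : s * s = E) by (apply sqrt_sqrt; lra).
  assert (ln (1 - s) <= ln (1 - E)) by (apply ln_le; nra).
  pose proof (Km_ge_ln s Hs). lra.
Qed.

Lemma filterlim_p_infty_of_ge_ln {T : Type} {FT : (T -> Prop) -> Prop} {HFT : Filter FT}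
  (f g : T -> R) C :
  filterlim g FT (at_right 0) -> FT (fun x => - ln (g x) / 2 - C <= f x) ->
  filterlim f FT (Rbar_locally p_infty).
Proof.
  intros Hg Hf.
  apply (filterlim_ge_p_infty (fun x => - ln (g x) / 2 - C)); [exact Hf|].
  apply (filterlim_comp _ _ _ g (fun y => - ln y / 2 - C) _ _ _ Hg).
  intros P [M HM]. unfold filtermap.
  apply (filter_imp (fun y => ln y < - 2 * (M + C))).
  - intros y Hy. apply HM. cbv beta. lra.
  - apply (is_lim_ln_0 (fun z => z < - 2 * (M + C))). now exists (- 2 * (M + C)).
Qed.

Lemma filterlim_sub_at_right a : filterlim (fun x => x - a) (at_right a) (at_right 0).
Proof.
  intros P [eps HP]. exists eps. intros y Hy Hay. apply HP; [|lra].
  apply Rabs_lt_between' in Hy. apply Rabs_lt_between'. lra.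
Qed.

Lemma filterlim_sub_at_left a : filterlim (fun x => a - x) (at_left a) (at_right 0).
Proof.
  intros P [eps HP]. exists eps. intros y Hy Hya. apply HP; [|lra].
  apply Rabs_lt_between' in Hy. apply Rabs_lt_between'. lra.
Qed.

Lemma F_lim_right_1 : filterlim F (at_right 1) (Rbar_locally p_infty).
Proof.
  apply (filterlim_p_infty_of_ge_ln F (fun E => E - 1) (3 * PI)).
  - apply filterlim_sub_at_right.
  - apply (filter_imp (fun E => 1 < E < 1 + 3)).
    + intros E HE. apply F_ge_ln_right. lra.
    + apply at_right_interval. lra.
Qed.

Lemma F_lim_left_1 : filterlim F (at_left 1) (Rbar_locally p_infty).
Proof.
  apply (filterlim_p_infty_of_ge_ln F (fun E => 1 - E) (2 * PI)).
  - apply filterlim_sub_at_left.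
  - apply (filter_imp (fun E => 1 - 1 < E < 1)).
    + intros E HE. apply F_ge_ln_left. lra.
    + apply at_left_interval. lra.
Qed.

(** * Behaviour at infinity *)

Lemma RInt_sin_sqr : RInt (fun t => sin t * sin t) 0 (PI / 2) = PI / 4.
Proof.
  apply is_RInt_unique.
  replace (PI / 4) with (minus ((fun t => t / 2 - sin (2 * t) / 4) (PI / 2))
                               ((fun t => t / 2 - sin (2 * t) / 4) 0)).
  - apply (is_RInt_derive (fun t => t / 2 - sin (2 * t) / 4)).
    + intros x _. auto_derive; [easy|].
      replace (2 * 1 * x) with (2 * x) by ring. rewrite cos_2a_sin. field.
    + intros x _. continuous_by_derive. easy.
  - unfold minus, plus, opp; simpl. replace (2 * (PI / 2)) with PI by field.
    rewrite sin_PI, Rmult_0_r, sin_0. field.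
Qed.

(* Gp s t = 4 (1 - (1 + s) sin t ^ 2) / sqrt (Dp s t) with 2 <= Dp s t <= 4 s. *)
Lemma Gp_le s t : 2 <= s -> Gp s t <= 3 - 2 * sqrt s * (sin t * sin t).
Proof.
  intros Hs.
  set (S := sin t * sin t).
  pose proof (sin_sqr_le_1 t) as HS. fold S in HS.
  pose proof (Dp_bounds s t ltac:(lra)) as [HD1 HD2].
  set (q := sqrt (Dp s t)).
  assert (Hq : 0 < q) by (apply sqrt_lt_R0; lra).
  assert (Hqq : q * q = Dp s t) by (apply sqrt_sqrt; lra).
  set (r := sqrt s).
  assert (Hr : 0 < r) by (apply sqrt_lt_R0; lra).
  assert (Hrr : r * r = s) by (apply sqrt_sqrt; lra).
  assert (Hq1 : 4 / 3 <= q) by nra.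
  assert (Hq2 : q <= 2 * r) by nra.
  assert (HG : Gp s t = 4 / q - 4 * (1 + s) * S / q).
  { unfold Gp. fold q. replace (2 * q) with (2 * (q * q) / q) by (field; lra).
    rewrite Hqq. unfold Dp. fold S. field. lra. }
  rewrite HG.
  assert (4 / q <= 3) by (apply Rle_div_l; lra).
  assert (2 * r * S <= 4 * (1 + s) * S / q).
  { assert (r * q <= 2 * s) by nra. apply (Rle_div_r _ _ q); nra. }
  lra.
Qed.

Lemma Kp_le s : 2 <= s -> Kp s <= 3 * PI / 2 - sqrt s * PI / 2.
Proof.
  intros Hs. pose proof PI_RGT_0.
  assert (Hsin2 : ex_RInt (fun t => sin t * sin t) 0 (PI / 2)).
  { apply (ex_RInt_continuous (V := R_CompleteNormedModule)).
    intros; continuous_by_derive; easy. }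
  apply Rle_trans with (RInt (fun t => 3 - 2 * sqrt s * (sin t * sin t)) 0 (PI / 2)).
  - apply RInt_le; [lra| | |].
    + apply (ex_RInt_continuous (V := R_CompleteNormedModule)).
      intros; apply Gp_continuous; lra.
    + apply (ex_RInt_continuous (V := R_CompleteNormedModule)).
      intros; continuous_by_derive; easy.
    + intros t _. now apply Gp_le.
  - right.
    rewrite (RInt_minus (V := R_CompleteNormedModule) (fun _ => 3)
               (fun t => 2 * sqrt s * (sin t * sin t))).
    + rewrite (RInt_scal (V := R_CompleteNormedModule) (fun t => sin t * sin t))
        by exact Hsin2.
      rewrite RInt_const, RInt_sin_sqr.
      unfold minus, plus, opp, scal; simpl; unfold mult; simpl. field.
    + apply ex_RInt_const.
    + apply (ex_RInt_scal (V := R_CompleteNormedModule)). exact Hsin2.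
Qed.

Lemma F_le E : 4 <= E -> F E <= 3 * PI / 2 - sqrt (sqrt E) * PI / 2.
Proof.
  intros HE. rewrite F_eq_Kp by lra. apply Kp_le.
  rewrite <- (sqrt_square 2) by lra. apply sqrt_le_1_alt. lra.
Qed.

Lemma F_lim_p_infty : is_lim F p_infty m_infty.
Proof.
  pose proof PI_RGT_0.
  apply (filterlim_le_m_infty (fun E => 3 * PI / 2 - sqrt (sqrt E) * PI / 2)).
  - exists 4. intros E HE. apply F_le. lra.
  - apply (filterlim_comp _ _ _ (fun E => sqrt (sqrt E)) (fun y => 3 * PI / 2 - y * PI / 2)
             _ (Rbar_locally p_infty)).
    + apply (filterlim_comp _ _ _ sqrt sqrt _ (Rbar_locally p_infty)); apply filterlim_sqrt_p.
    + intros P [M HM]. exists ((3 * PI / 2 - M) * 2 / PI). intros y Hy. apply HM.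
      apply Rlt_div_l in Hy; lra.
Qed.

(** * The derivative above E = 1 *)

Definition dGp (s t : R) :=
  (2 * (1 - sin t * sin t) * Dp s t - 4 * s * (1 + sin t * sin t)) / (Dp s t * sqrt (Dp s t)).

Lemma Gp_derive_param s t : 1 < s -> is_derive (fun u => Gp u t) s (dGp s t).
Proof.
  intros Hs. pose proof (Dp_pos s t Hs) as HD.
  assert (Hq : 0 < sqrt (Dp s t)) by (apply sqrt_lt_R0; lra).
  assert (Hqq : sqrt (Dp s t) * sqrt (Dp s t) = Dp s t) by (apply sqrt_sqrt; lra).
  unfold Gp, dGp, Dp.
  auto_derive;
    replace (2 * (1 + s) * (sin t * sin t) + 2 * s + - (2)) with (Dp s t) by (unfold Dp; ring);
    replace (2 * (1 + s) * (sin t * sin t) + 2 * s - 2) with (Dp s t) by (unfold Dp; ring).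
  - repeat split; lra.
  - revert Hq Hqq. generalize (sqrt (Dp s t)). intros q Hq Hqq.
    rewrite <- Hqq. field. lra.
Qed.

(* With S = sin t ^ 2 the numerator of dGp is 4 (- (1 + s) S^2 + (2 - s) S - 1) < 0. *)
Lemma dGp_neg s t : 1 < s -> dGp s t < 0.
Proof.
  intros Hs. pose proof (Dp_pos s t Hs) as HD.
  set (S := sin t * sin t).
  pose proof (sin_sqr_le_1 t) as HS. fold S in HS.
  assert (Hq : 0 < sqrt (Dp s t)) by (apply sqrt_lt_R0; lra).
  unfold dGp. fold S.
  apply Rdiv_neg_pos; [| apply Rmult_lt_0_compat; lra].
  unfold Dp. fold S.
  assert (- (1 + s) * S * S + (2 - s) * S - 1 < 0).
  { destruct (Rle_or_lt 2 s).
    - assert ((2 - s) * S <= 0) by nra. assert (0 <= (1 + s) * S * S) by nra. lra.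
    - nra. }
  nra.
Qed.

Ltac continuity_2d :=
  repeat first
    [ apply continuity_2d_pt_plus | apply continuity_2d_pt_minus
    | apply continuity_2d_pt_mult | apply continuity_2d_pt_const
    | apply continuity_2d_pt_opp | apply continuity_2d_pt_id1 | assumption
    | apply (continuity_1d_2d_pt_comp sin (fun u v => v));
        [apply continuity_sin| apply continuity_2d_pt_id2] ].

Lemma continuity_2d_pt_Dp s t : continuity_2d_pt Dp s t.
Proof. unfold Dp. continuity_2d. Qed.

Lemma continuity_2d_pt_dGp s t : 1 < s -> continuity_2d_pt dGp s t.
Proof.
  intros Hs. pose proof (Dp_pos s t Hs) as HD.
  assert (Hq : 0 < sqrt (Dp s t)) by (apply sqrt_lt_R0; lra).
  pose proof (continuity_2d_pt_Dp s t) as HDp.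
  unfold dGp, Rdiv. apply continuity_2d_pt_mult.
  - continuity_2d.
  - apply (continuity_2d_pt_inv (fun u v => Dp u v * sqrt (Dp u v))); [| nra].
    apply continuity_2d_pt_mult; [exact HDp|].
    apply (continuity_1d_2d_pt_comp sqrt Dp); [apply continuity_pt_sqrt; lra| exact HDp].
Qed.

Lemma continuous_RInt_param (f : R -> R -> R) a b x (P : R -> Prop) :
  a < b ->
  (forall t, a <= t <= b -> continuity_2d_pt f x t) ->
  locally x P ->
  (forall y, P y -> forall t, a <= t <= b -> continuous (f y) t) ->
  continuous (fun y => RInt (f y) a b) x.
Proof.
  intros Hab Hc HP Hfc.
  assert (Hex : forall y, P y -> ex_RInt (f y) a b).
  { intros y Py. apply (ex_RInt_continuous (V := R_CompleteNormedModule)).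
    intros t Ht. rewrite Rmin_left, Rmax_right in Ht by lra. now apply Hfc. }
  apply filterlim_locally. intros eps.
  assert (He : 0 < eps / (2 * (b - a))) by (apply Rdiv_lt_0_compat; [apply cond_pos| lra]).
  destruct (uniform_continuity_2d_1d' f a b x Hc (mkposreal _ He)) as [d Hd].
  assert (Px : P x) by exact (locally_singleton _ _ HP).
  assert (Hl : locally x (fun y => Rabs (y - x) < d)) by (now exists d).
  generalize (filter_and _ _ HP Hl). apply filter_imp. intros y [Py Hy].
  change (Rabs (RInt (f y) a b - RInt (f x) a b) < eps).
  replace (RInt (f y) a b - RInt (f x) a b) with (RInt (fun t => f y t - f x t) a b)
    by (apply (RInt_minus (V := R_CompleteNormedModule)); now apply Hex).
  apply Rle_lt_trans with ((b - a) * (eps / (2 * (b - a)))).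
  - apply abs_RInt_le_const; [lra| |].
    + apply (ex_RInt_minus (V := R_CompleteNormedModule)); now apply Hex.
    + intros t Ht. left. pose proof (cond_pos d).
      apply (Hd t x t y Ht); try lra.
      * apply Rabs_lt_between' in Hy. lra.
      * rewrite Rminus_eq_0, Rabs_R0. apply cond_pos.
  - replace ((b - a) * (eps / (2 * (b - a)))) with (eps / 2) by (field; lra).
    pose proof (cond_pos eps). lra.
Qed.

Definition dKp (s : R) := RInt (dGp s) 0 (PI / 2).

Lemma locally_gt_1 s : 1 < s -> locally s (fun y => 1 < y).
Proof.
  intros Hs. exists (mkposreal (s - 1) ltac:(lra)). intros y Hy.
  apply Rabs_lt_between' in Hy. simpl in Hy. lra.
Qed.

Lemma Kp_derive s : 1 < s -> is_derive Kp s (dKp s).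
Proof.
  intros Hs. unfold Kp, dKp.
  rewrite <- (RInt_ext (fun t => Derive (fun u => Gp u t) s)).
  - apply (is_derive_RInt_param Gp 0 (PI / 2) s).
    + apply (filter_imp (fun y => 1 < y)); [| now apply locally_gt_1].
      intros y Hy t _. eexists. now apply Gp_derive_param.
    + intros t _. apply (continuity_2d_pt_ext_loc dGp); [| now apply continuity_2d_pt_dGp].
      exists (mkposreal (s - 1) ltac:(lra)). intros u v Hu _.
      apply Rabs_lt_between' in Hu. simpl in Hu.
      symmetry. apply is_derive_unique, Gp_derive_param. lra.
    + apply (filter_imp (fun y => 1 < y)); [| now apply locally_gt_1].
      intros y Hy. apply (ex_RInt_continuous (V := R_CompleteNormedModule)).
      intros; now apply Gp_continuous.
  - intros t _. apply is_derive_unique. now apply Gp_derive_param.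
Qed.

Lemma dGp_continuous s t : 1 < s -> continuous (dGp s) t.
Proof.
  intros Hs. pose proof (Dp_pos s t Hs) as HD.
  assert (Hq : 0 < sqrt (Dp s t)) by (apply sqrt_lt_R0; lra).
  unfold dGp. unfold Dp at 1 2 3.
  continuous_by_derive.
  replace (2 * (1 + s) * (sin t * sin t) + 2 * s + - (2)) with (Dp s t) by (unfold Dp; ring).
  repeat split; try lra. apply Rgt_not_eq. nra.
Qed.

Lemma dKp_neg s : 1 < s -> dKp s < 0.
Proof.
  intros Hs. unfold dKp. pose proof PI_RGT_0.
  apply Rlt_le_trans with (RInt (fun _ => 0) 0 (PI / 2)).
  - apply RInt_lt; [lra| intros; apply continuous_const| |].
    + intros; now apply dGp_continuous.
    + intros; now apply dGp_neg.
  - rewrite RInt_const. unfold scal; simpl; unfold mult; simpl. lra.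
Qed.

Lemma dKp_continuous s : 1 < s -> continuous dKp s.
Proof.
  intros Hs. apply (continuous_RInt_param dGp 0 (PI / 2) s (fun y => 1 < y)).
  - pose proof PI_RGT_0. lra.
  - intros; now apply continuity_2d_pt_dGp.
  - now apply locally_gt_1.
  - intros; now apply dGp_continuous.
Qed.

Lemma F_derive E : 1 < E -> is_derive F E (dKp (sqrt E) / (2 * sqrt E)).
Proof.
  intros HE. pose proof (sqrt_gt_1 E HE) as Hs.
  apply (is_derive_ext_loc (fun y => Kp (sqrt y))).
  - apply (filter_imp (fun y => 1 < y)); [| now apply locally_gt_1].
    intros y Hy. symmetry. now apply F_eq_Kp.
  - replace (dKp (sqrt E) / (2 * sqrt E)) with (scal (/ (2 * sqrt E)) (dKp (sqrt E)))
      by (unfold scal; simpl; unfold mult; simpl; field; lra).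
    apply (is_derive_comp Kp sqrt E).
    + now apply Kp_derive.
    + auto_derive; [lra| field; lra].
Qed.

Lemma Derive_F E : 1 < E -> Derive F E = dKp (sqrt E) / (2 * sqrt E).
Proof. intros HE. now apply is_derive_unique, F_derive. Qed.

Lemma Derive_F_neg E : 1 < E -> Derive F E < 0.
Proof.
  intros HE. pose proof (sqrt_gt_1 E HE). rewrite Derive_F by exact HE.
  apply Rdiv_neg_pos; [apply dKp_neg|]; lra.
Qed.

Lemma Derive_F_continuous E : 1 < E -> continuous (Derive F) E.
Proof.
  intros HE. pose proof (sqrt_gt_1 E HE) as Hs.
  apply (continuous_ext_loc _ (fun y => dKp (sqrt y) * / (2 * sqrt y))).
  - apply (filter_imp (fun y => 1 < y)); [| now apply locally_gt_1].
    intros y Hy. now rewrite Derive_F.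
  - apply (continuous_mult (fun y => dKp (sqrt y)) (fun y => / (2 * sqrt y))).
    + apply (continuous_comp sqrt dKp).
      * continuous_by_derive. lra.
      * now apply dKp_continuous.
    + continuous_by_derive. repeat split; lra.
Qed.

(** * The zero of F *)

Lemma unique_zero_of_Derive_neg (f : R -> R) a :
  (forall x, a < x -> ex_derive f x) ->
  (forall x, a < x -> Derive f x < 0) ->
  filterlim f (at_right a) (Rbar_locally p_infty) ->
  is_lim f p_infty m_infty ->
  exists c, a < c /\ f c = 0 /\ (forall x, a < x -> f x = 0 -> x = c).
Proof.
  intros Hd Hneg Ha Hinf.
  assert (Hdecr : forall x y, a < x -> x < y -> f y < f x).
  { intros x y Hx Hxy.
    cut (- f x < - f y); [lra|].
    apply (incr_function (fun z => - f z) (Finite a) p_infty (fun z => - Derive f z));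
      simpl; try easy.
    - intros z Hz _. apply (is_derive_opp f). apply Derive_correct. now apply Hd.
    - intros z Hz _. specialize (Hneg z Hz). lra. }
  destruct (Ha (fun y => 0 < y)) as [eps Heps]; [now exists 0|].
  set (x1 := a + eps / 2).
  assert (Hx1 : 0 < f x1).
  { apply Heps; [| unfold x1; pose proof (cond_pos eps); lra].
    apply Rabs_lt_between'. unfold x1. pose proof (cond_pos eps). lra. }
  destruct (Hinf (fun y => y < 0)) as [M HM]; [now exists 0|].
  set (x2 := Rmax (x1 + 1) (M + 1)).
  assert (Hx12 : x1 + 1 <= x2) by apply Rmax_l.
  assert (HMx2 : M + 1 <= x2) by apply Rmax_r.
  assert (Hx2 : f x2 < 0) by (apply HM; lra).
  assert (Ha1 : a < x1) by (unfold x1; pose proof (cond_pos eps); lra).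
  destruct (IVT_interv (fun x => - f x) x1 x2) as [c [Hc Hfc]]; try lra.
  - intros x Hx. apply continuity_pt_opp, continuity_pt_filterlim.
    apply ex_derive_continuous_R, Hd. lra.
  - exists c. split; [lra| split; [lra|]].
    intros x Hx Hfx.
    destruct (Rtotal_order x c) as [Hlt|[Heq|Hgt]]; [| exact Heq|].
    + pose proof (Hdecr x c Hx Hlt). lra.
    + pose proof (Hdecr c x ltac:(lra) Hgt). lra.
Qed.

Theorem proposition3p12 :
  (* (1) F is C^1 on (1,+oo) and F' < 0 there *)
  ((forall E, 1 < E -> ex_derive F E /\ continuous (Derive F) E) /\
   (forall E, 1 < E -> Derive F E < 0)) /\
  (* (2) F(E) -> -oo as E -> +oo *)
  is_lim F p_infty m_infty /\
  (* (3) F(E) -> +oo as E -> 1+ and as E -> 1- *)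
  (filterlim F (at_right 1) (Rbar_locally p_infty) /\
   filterlim F (at_left 1) (Rbar_locally p_infty)) /\
  (* (4) unique zero E_c in (1,+oo), with F'(E_c) < 0 *)
  (exists Ec, 1 < Ec /\ F Ec = 0 /\
     (forall E, 1 < E -> F E = 0 -> E = Ec) /\ Derive F Ec < 0) /\
  (* (5) F > 0 on (0,1) *)
  (forall E, 0 < E < 1 -> 0 < F E).
Proof.
  assert (HdF : forall E, 1 < E -> ex_derive F E) by (intros E HE; eexists; now apply F_derive).
  split; [split|split; [|split; [split|split]]].
  - intros E HE. split; [now apply HdF| now apply Derive_F_continuous].
  - exact Derive_F_neg.
  - exact F_lim_p_infty.
  - exact F_lim_right_1.
  - exact F_lim_left_1.
  - destruct (unique_zero_of_Derive_neg F 1 HdF Derive_F_neg F_lim_right_1 F_lim_p_infty)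
      as [Ec [HEc [HF0 Huniq]]].
    exists Ec. repeat split; auto. now apply Derive_F_neg.
  - exact F_pos_lt_1.
Qed.
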